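(* There exist exactly seven non-trivial shadows of genus $0$ over two backbones.
   Context: A diagram over $b$ backbones consists of the vertex set $[N]=\{1,\dots,N\}$, a partition of $[N]$ into $b$ backbones (maximal blocks of consecutive integers, ordered left to right), and a set of arcs $(i,j)$ with $i<j$, each vertex being incident to at most one arc. It is drawn with the vertices in increasing order on a horizontal line, each backbone as a segment joining its consecutive vertices, and the arcs in the upper half-plane. Two arcs $(i,j),(k,l)$ cross if $i<k<j<l$ or $k<i<l<j$. Genus: collapsing each backbone to a single vertex, the planar drawing determines a fatgraph (ribbon graph) with $b$ vertices and one edge per arc, hence an oriented surface with boundary; let $r$ be its number of boundary components (a backbone carrying no arcs contributes one boundary component). With $n$ the number of arcs, the genus $g$ is defined by $2-2g-r=b-n$. A stack is a maximal collection of arcs of the form $(i,j),(i+1,j-1),\dots,(i+\ell-1,j-\ell+1)$; its size is $\ell$. An arc is non-crossing if no other arc crosses it; a vertex is isolated if no arc is incident to it. A shadow is a diagram with no non-crossing arcs and no isolated vertices in which every stack has size one. A shadow is non-trivial if each of its backbones contains at least one vertex incident to an arc. *)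

From mathcomp Require Import all_boot all_order all_algebra.
Set Implicit Arguments. Unset Strict Implicit. Unset Printing Implicit Defensive.
Import GRing.Theory.

(* A diagram is a triple (N, bs, arcs):
   - vertex set [N] = {1,...,N};
   - bs = [:: s_1; ...; s_b] the sizes of the backbones, left to right
     (backbone t consists of the s_t consecutive vertices following the
     previous backbones);
   - arcs = the list of arcs (i,j), i < j, listed by increasing left end
     (canonical representation of the arc set). *)
Definition diagram := (nat * seq nat * seq (nat * nat))%type.

Definition dN (d : diagram) : nat := d.1.1.
Definition dbs (d : diagram) : seq nat := d.1.2.
Definition darcs (d : diagram) : seq (nat * nat) := d.2.

Definition nbackbones (d : diagram) : nat := size (dbs d).
Definition narcs (d : diagram) : nat := size (darcs d).

Definition endpoints (d : diagram) : seq nat :=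
  flatten [seq [:: a.1; a.2] | a <- darcs d].

Definition valid_diagram (d : diagram) : bool :=
  [&& all (fun k => 0 < k) (dbs d),
      sumn (dbs d) == dN d,
      all (fun a => [&& 1 <= a.1, a.1 < a.2 & a.2 <= dN d]) (darcs d),
      uniq (endpoints d)
    & sorted (fun a b => a.1 < b.1) (darcs d)].

Definition psums (bs : seq nat) : seq nat :=
  [seq sumn (take k.+1 bs) | k <- iota 0 (size bs)].

(* 0-based index of the backbone containing vertex v (1 <= v <= N) *)
Definition bbidx (d : diagram) (v : nat) : nat :=
  count (fun s => s < v) (psums (dbs d)).

Definition crossing (a c : nat * nat) : bool :=
  ((a.1 < c.1) && (c.1 < a.2) && (a.2 < c.2)) ||
  ((c.1 < a.1) && (a.1 < c.2) && (c.2 < a.2)).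

Definition noncrossing_arc (d : diagram) (a : nat * nat) : bool :=
  ~~ has (crossing a) (darcs d).

Definition isolated (d : diagram) (v : nat) : bool := v \notin endpoints d.

(* every stack has size one iff no two arcs (i,j), (i+1,j-1) *)
Definition stacks_size_one (d : diagram) : bool :=
  ~~ has (fun a => (a.1.+1, a.2.-1) \in darcs d) (darcs d).

Definition shadow (d : diagram) : bool :=
  [&& all (fun a => ~~ noncrossing_arc d a) (darcs d),
      all (fun v => ~~ isolated d v) (iota 1 (dN d))
    & stacks_size_one d].

Definition backbone_used (d : diagram) (t : nat) : bool :=
  has (fun v => bbidx d v == t) (endpoints d).

Definition nontrivial (d : diagram) : bool :=
  all (backbone_used d) (iota 0 (nbackbones d)).

(* Fatgraph obtained by collapsing each backbone to a vertex:
   half-edges = arc endpoints; sigma = arc involution (partner);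
   gamma = cyclic successor among the arc endpoints of the same backbone
   (left-to-right order, wrapping around).  Boundary components of the
   fatgraph = cycles of gamma o sigma, plus one per backbone without arcs. *)
Definition partner (d : diagram) (v : nat) : nat :=
  foldr (fun a r => if a.1 == v then a.2 else if a.2 == v then a.1 else r)
        v (darcs d).

Definition same_backbone_endpoints (d : diagram) (v : nat) : seq nat :=
  [seq u <- iota 1 (dN d) | (u \in endpoints d) && (bbidx d u == bbidx d v)].

Definition gamma (d : diagram) (v : nat) : nat :=
  let es := same_backbone_endpoints d v in
  nth v es ((index v es).+1 %% size es).

Definition face_perm (d : diagram) (v : nat) : nat := gamma d (partner d v).

Definition face_orbit (d : diagram) (v : nat) : seq nat :=
  [seq iter k (face_perm d) v | k <- iota 0 (dN d).+1].

(* number of cycles of gamma o sigma: count the minimal element of each *)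
Definition ncycles (d : diagram) : nat :=
  count (fun v => all (fun w => v <= w) (face_orbit d v)) (endpoints d).

Definition nboundary (d : diagram) : nat :=
  ncycles d + count (fun t => ~~ backbone_used d t) (iota 0 (nbackbones d)).

Definition has_genus (d : diagram) (g : nat) : Prop :=
  (2%:Z - (2 * g)%:Z - (nboundary d)%:Z =
   (nbackbones d)%:Z - (narcs d)%:Z)%R.

From Pilot Require Import Defs.
From mathcomp Require Import all_boot all_order all_algebra zify.

Set Implicit Arguments.
Unset Strict Implicit.
Unset Printing Implicit Defensive.

(* In a two-backbone shadow every vertex is an arc endpoint, so N = 2n, and when
   both backbones carry arcs, genus 0 says that the face permutation gamma o sigma
   has exactly n cycles.  A fixed point would come from an arc (v - 1, v), which
   no arc can cross, and a 2-cycle from a stack of size two; so only the (at most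
   two) cycles through the first vertex of a backbone can have fewer than three
   points.  Hence 3n <= 2n + 4, i.e. N <= 8, and the shadows are found by
   enumerating the canonical arc lists on at most eight vertices. *)

Lemma iter_period_mul (T : Type) (f : T -> T) (v : T) (p q : nat) :
  iter p f v = v -> iter (q * p) f v = v.
Proof. by move=> fixv; elim: q => //= q IHq; rewrite mulSn iterD IHq. Qed.

(* The point counted by [Defs.ncycles]; for an injection of a set of at most [N]
   points it marks exactly one point of each cycle. *)
Definition least_in_orbit (f : nat -> nat) (N v : nat) : bool :=
  all (fun w => v <= w) [seq iter k f v | k <- iota 0 N.+1].

Section ShortCycles.
Variables (f : nat -> nat) (N : nat) (dom marked : seq nat).
Hypothesis dom_size : size dom <= N.
Hypothesis f_dom : {in dom, forall v, f v \in dom}.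
Hypothesis f_inj : {in dom &, injective f}.
Hypothesis short_cycle_marked : {in dom, forall v,
  f v = v \/ f (f v) = v -> (v \in marked) || (f v \in marked)}.

Local Notation least := (least_in_orbit f N).

Lemma iter_dom k : {in dom, forall v, iter k f v \in dom}.
Proof. by move=> v v_dom; elim: k => //= k; apply: f_dom. Qed.

Lemma iter_inj_dom k : {in dom &, injective (iter k f)}.
Proof.
move=> u v u_dom v_dom; elim: k => //= k IHk /f_inj eq_fk.
by apply: IHk; apply: eq_fk; apply: iter_dom.
Qed.

Lemma iter_period v : v \in dom -> exists2 p, 0 < p <= N & iter p f v = v.
Proof.
move=> v_dom; set s := [seq iter i f v | i <- iota 0 N.+1].
have : ~~ uniq s.
  apply/negP => s_uniq.
  have s_dom : {subset s <= dom} by move=> _ /mapP [i _ ->]; apply: iter_dom.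
  by have := leq_trans (uniq_leq_size s_uniq s_dom) dom_size; rewrite size_map size_iota ltnn.
case/(uniqPn 0) => i [j [lt_ij]]; rewrite size_map size_iota => lt_jN.
rewrite !(nth_map 0) ?size_iota ?(ltn_trans lt_ij) // !nth_iota ?(ltn_trans lt_ij) //.
rewrite !add0n => eq_ij; exists (j - i); first lia.
apply: (@iter_inj_dom i); rewrite ?iter_dom //.
by rewrite -iterD subnKC ?(ltnW lt_ij).
Qed.

Lemma least_in_orbit_le v k : v \in dom -> least v -> v <= iter k f v.
Proof.
move=> v_dom /allP v_least; have [p /andP [p_gt0 p_le] fp_v] := iter_period v_dom.
rewrite {1}(divn_eq k p) addnC iterD iter_period_mul //.
apply: v_least; apply/mapP; exists (k %% p) => //.
by rewrite mem_iota add0n ltnS (leq_trans (ltnW (ltn_pmod k p_gt0))).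
Qed.

Lemma least_in_orbit_unique u v m :
  v \in dom -> least u -> least v -> u = iter m f v -> u = v.
Proof.
move=> v_dom u_least v_least u_def.
have u_dom : u \in dom by rewrite u_def iter_dom.
have [p /andP [p_gt0 _] fp_v] := iter_period v_dom.
have v_def : iter (p.-1 * m) f u = v.
  by rewrite u_def -iterD -mulSnr prednK // mulnC iter_period_mul.
apply/eqP; rewrite eqn_leq.
have := least_in_orbit_le (p.-1 * m) u_dom u_least; rewrite v_def => ->.
by have := least_in_orbit_le m v_dom v_least; rewrite -u_def => ->.
Qed.

Definition first_iterates v := undup [:: v; f v; f (f v)].

Lemma mem_first_iterates x v : x \in first_iterates v -> exists i, x = iter i f v.
Proof. by rewrite mem_undup !inE => /or3P [] /eqP ->; [exists 0 | exists 1 | exists 2]. Qed.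

Lemma first_iterates_dom v : v \in dom -> {subset first_iterates v <= dom}.
Proof. by move=> v_dom x /mem_first_iterates [i ->]; apply: iter_dom. Qed.

Lemma least_in_orbit_iter_eq u v i j : u \in dom -> v \in dom -> least u -> least v ->
  iter i f u = iter j f v -> u = v.
Proof.
wlog le_ji : u v i j / j <= i.
  move=> wlog_le u_dom v_dom u_least v_least eq_ij; case: (leqP j i) => [le_ji | /ltnW le_ij].
    exact: (wlog_le u v i j).
  by symmetry; apply: (wlog_le v u j i).
move=> u_dom v_dom u_least v_least; rewrite -(subnKC le_ji) iterD.
move/(iter_inj_dom (iter_dom _ u_dom) v_dom) => v_def.
by symmetry; apply: (least_in_orbit_unique u_dom v_least u_least); rewrite -v_def.
Qed.

Lemma first_iterates_disjoint u v x : u \in dom -> v \in dom -> least u -> least v ->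
  x \in first_iterates u -> x \in first_iterates v -> u = v.
Proof.
move=> u_dom v_dom u_least v_least /mem_first_iterates [i ->] /mem_first_iterates [j].
exact: least_in_orbit_iter_eq.
Qed.

Lemma first_iterates_weight v : v \in dom ->
  3 <= size (first_iterates v) + 2 * count (mem marked) (first_iterates v).
Proof.
move=> v_dom; have [v_marked | v_unmarked] := boolP ((v \in marked) || (f v \in marked)).
  have : has (mem marked) (first_iterates v).
    apply/hasP; case/orP: v_marked => marked_v; [exists v | exists (f v)] => //.
      by rewrite mem_undup inE eqxx.
    by rewrite mem_undup !inE eqxx orbT.
  by rewrite has_count; case: (first_iterates v) => //= *; lia.
have fv_neq : f v != v.
  by apply: contraNneq v_unmarked => fv; apply: (short_cycle_marked v_dom); left.
have ffv_neq : f (f v) != v.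
  by apply: contraNneq v_unmarked => ffv; apply: (short_cycle_marked v_dom); right.
have ffv_neq_fv : f (f v) != f v by apply: contra_neq fv_neq; apply: f_inj; rewrite ?f_dom.
have : uniq [:: v; f v; f (f v)].
  by rewrite /= !inE !negb_or andbT ![v == _]eq_sym [f v == f _]eq_sym fv_neq ffv_neq ffv_neq_fv.
by rewrite /first_iterates => /undup_id ->.
Qed.

Lemma first_iterates_uniq (C : seq nat) : uniq C -> {subset C <= dom} -> all least C ->
  uniq (flatten (map first_iterates C)).
Proof.
elim: C => //= c C IHC /andP [c_notin C_uniq] C_dom /andP [c_least C_least].
rewrite cat_uniq undup_uniq IHC // => [|x xC]; last by apply: C_dom; rewrite inE xC orbT.
rewrite andbT; apply/hasP => -[x /flattenP [_ /mapP [c' c'C ->] x_c'] x_c].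
have c'_eq := first_iterates_disjoint (C_dom c (mem_head _ _)) (C_dom c' _) c_least
  (allP C_least c' c'C) x_c x_c'.
by move: c_notin; rewrite c'_eq ?c'C // inE c'C orbT.
Qed.

Lemma first_iterates_weight_sum (C : seq nat) : {subset C <= dom} ->
  3 * size C <= size (flatten (map first_iterates C))
                + 2 * count (mem marked) (flatten (map first_iterates C)).
Proof.
elim: C => //= c C IHC C_dom.
have := first_iterates_weight (C_dom c (mem_head _ _)).
have := IHC (fun x xC => C_dom x (mem_behead (s := c :: C) xC)).
rewrite size_cat count_cat.
move: (size (first_iterates c)) (count _ (first_iterates c))
  (size (flatten _)) (count _ (flatten _)) => *; lia.
Qed.

Lemma count_least_in_orbit : uniq dom ->
  3 * count least dom <= size dom + 2 * size marked.
Proof.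
move=> dom_uniq; rewrite -size_filter; set C := filter least dom.
have C_dom : {subset C <= dom} by move=> x; rewrite mem_filter => /andP [].
have C_least : all least C by apply/allP => x; rewrite mem_filter => /andP [].
have U_uniq := first_iterates_uniq (filter_uniq _ dom_uniq) C_dom C_least.
have U_dom : size (flatten (map first_iterates C)) <= size dom.
  apply: uniq_leq_size U_uniq _ => x /flattenP [_ /mapP [c cC ->]].
  exact: first_iterates_dom (C_dom c cC) x.
have U_marked : count (mem marked) (flatten (map first_iterates C)) <= size marked.
  by rewrite -size_filter uniq_leq_size ?filter_uniq // => x; rewrite mem_filter => /andP [].
have := first_iterates_weight_sum C_dom; lia.
Qed.

End ShortCycles.

Definition arc_endpoints (l : seq (nat * nat)) : seq nat :=
  flatten [seq [:: a.1; a.2] | a <- l].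

Lemma arc_endpointsP l v :
  reflect (exists2 a, a \in l & (v == a.1) || (v == a.2)) (v \in arc_endpoints l).
Proof.
apply: (iffP flattenP) => [[_ /mapP [a al ->]] | [a al va]].
  by rewrite !inE; exists a.
by exists [:: a.1; a.2]; [apply: map_f | rewrite !inE].
Qed.

Lemma size_arc_endpoints l : size (arc_endpoints l) = 2 * size l.
Proof. by elim: l => //= a l IHl; rewrite IHl mulnS. Qed.

Lemma partner_of_arc d x y : uniq (endpoints d) -> (x, y) \in darcs d ->
  partner d x = y /\ partner d y = x.
Proof.
rewrite /endpoints /partner; elim: (darcs d) => //= -[a1 a2] l IHl.
rewrite /= inE negb_or => /andP [/andP [a12 a1l] /andP [a2l l_uniq]].
case/orP => [/eqP [-> ->] | xy_l] /=; first by rewrite eqxx (negbTE a12) eqxx.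
have /andP [x_l y_l] : (x \in arc_endpoints l) && (y \in arc_endpoints l).
  by apply/andP; split; apply/arc_endpointsP; exists (x, y); rewrite ?eqxx ?orbT.
have neq w : w \in arc_endpoints l -> (a1 == w) = false /\ (a2 == w) = false.
  by move=> w_l; split; [apply: contraNF a1l | apply: contraNF a2l] => /eqP ->.
have [-> ->] := neq x x_l; have [-> ->] := neq y y_l.
exact: IHl.
Qed.

Lemma index_iota m n v : m <= v < m + n -> index v (iota m n) = v - m.
Proof.
move=> v_range; have nth_v : nth 0 (iota m n) (v - m) = v by rewrite nth_iota; lia.
by rewrite -{1}nth_v index_uniq ?iota_uniq ?size_iota //; lia.
Qed.

Section TwoBackbones.
Variables (d : diagram) (s1 s2 : nat).
Hypothesis d_valid : valid_diagram d.
Hypothesis d_bs : dbs d = [:: s1; s2].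
Hypothesis d_shadow : shadow d.

Local Notation N := (dN d).
Local Notation arcs := (darcs d).

Lemma backbones_pos : 0 < s1 /\ 0 < s2.
Proof. by case/and5P: d_valid; rewrite d_bs /= andbT => /andP. Qed.

Lemma dN_two_backbones : N = s1 + s2.
Proof. by case/and5P: d_valid => _; rewrite d_bs /= addn0 => /eqP. Qed.

Lemma arc_bounds x y : (x, y) \in arcs -> [/\ 0 < x, x < y & y <= N].
Proof. by case/and5P: d_valid => _ _ /allP arcsP _ _ /arcsP /and3P. Qed.

Lemma endpoints_uniq : uniq (endpoints d).
Proof. by case/and5P: d_valid. Qed.

Lemma mem_endpoints v : (v \in endpoints d) = (0 < v <= N).
Proof.
apply/idP/idP => [/arc_endpointsP [[x y] /arc_bounds [x_gt0 lt_xy le_yN]] /= /orP [] /eqP ->|];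
  first [lia | move=> v_range].
case/and3P: d_shadow => _ /allP isolatedP _.
by have := isolatedP v; rewrite mem_iota add1n ltnS /isolated negbK; apply.
Qed.

Lemma arc_crossed x y : (x, y) \in arcs -> has (crossing (x, y)) arcs.
Proof.
by case/and3P: d_shadow => /allP crossedP _ _ /crossedP; rewrite /noncrossing_arc negbK.
Qed.

Lemma no_stack_arcs x y : (x, y) \in arcs -> (x.+1, y.-1) \in arcs -> False.
Proof.
case/and3P: d_shadow => _ _ /hasPn stacksP /stacksP /= /negP; exact.
Qed.

Lemma partner_arc u : 0 < u <= N -> (u, partner d u) \in arcs \/ (partner d u, u) \in arcs.
Proof.
rewrite -mem_endpoints => /arc_endpointsP [[x y] xy /= /orP [] /eqP ->];
  have [px py] := partner_of_arc endpoints_uniq xy; rewrite ?px ?py; by [left | right].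
Qed.

Lemma partnerK u : 0 < u <= N -> partner d (partner d u) = u.
Proof.
by case/partner_arc => /(partner_of_arc endpoints_uniq) [pu pp]; rewrite ?pu ?pp.
Qed.

Lemma partner_range u : 0 < u <= N -> 0 < partner d u <= N.
Proof. by case/partner_arc => /arc_bounds [] *; lia. Qed.

Definition backbone_next v := if v == s1 then 1 else if v == N then s1.+1 else v.+1.

Lemma bbidx_two_backbones u : u <= N -> bbidx d u = (s1 < u).
Proof.
by move=> le_uN; rewrite /bbidx d_bs /= !addn0 -dN_two_backbones [N < u]ltnNge le_uN addn0.
Qed.

Lemma same_backbone_endpoints_two v : 0 < v <= N ->
  same_backbone_endpoints d v = if v <= s1 then iota 1 s1 else iota s1.+1 s2.
Proof.
move=> v_range; have N_eq := dN_two_backbones.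
have bb_v := bbidx_two_backbones (proj2 (andP v_range)).
rewrite /same_backbone_endpoints N_eq iotaD filter_cat add1n.
rewrite (@eq_in_filter _ _ (fun=> v <= s1)) => [|u]; last first.
  rewrite mem_iota => u_range; rewrite mem_endpoints bb_v bbidx_two_backbones; lia.
rewrite (@eq_in_filter _ _ (fun=> s1 < v) (iota s1.+1 s2)) => [|u]; last first.
  rewrite mem_iota => u_range; rewrite mem_endpoints bb_v bbidx_two_backbones; lia.
by case: leqP => _; rewrite ?filter_predT ?filter_pred0 ?cats0.
Qed.

Lemma gamma_two_backbones v : 0 < v <= N -> gamma d v = backbone_next v.
Proof.
move=> v_range; have N_eq := dN_two_backbones; have [s1_gt0 s2_gt0] := backbones_pos.
rewrite /gamma same_backbone_endpoints_two // /backbone_next.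
case: (leqP v s1) => le_vs1; rewrite index_iota ?size_iota; try lia.
  have [-> | ne_vs1] := eqVneq v s1; first by rewrite subn1 prednK // modnn nth_iota.
  by rewrite modn_small ?nth_iota; [case: eqP; lia | lia | lia].
rewrite (_ : v == s1 = false); last lia.
have [-> | ne_vN] := eqVneq v N.
  by rewrite (_ : (N - s1.+1).+1 = s2) ?modnn ?nth_iota ?addn0 //; lia.
by rewrite modn_small ?nth_iota; lia.
Qed.

Local Notation face := (face_perm d).
Local Notation marked := [:: 1; s1.+1].

Lemma face_perm_two_backbones v : 0 < v <= N -> face v = backbone_next (partner d v).
Proof. by move=> v_range; rewrite /face_perm gamma_two_backbones // partner_range. Qed.

Lemma backbone_next_range w : 0 < w <= N -> 0 < backbone_next w <= N.
Proof.
have := dN_two_backbones; rewrite /backbone_next => N_eq w_range.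
by case: (w =P s1); case: (w =P N); lia.
Qed.

Lemma backbone_next_inj : {in [pred w | 0 < w <= N] &, injective backbone_next}.
Proof.
have := dN_two_backbones; move=> N_eq u v; rewrite !inE /backbone_next.
by case: (u =P s1); case: (u =P N); case: (v =P s1); case: (v =P N); lia.
Qed.

Lemma backbone_next_unmarked w : backbone_next w \notin marked -> backbone_next w = w.+1.
Proof. by rewrite /backbone_next; case: (w =P s1); case: (w =P N); rewrite ?inE ?eqxx ?orbT. Qed.

Lemma face_range v : 0 < v <= N -> 0 < face v <= N.
Proof.
by move=> v_range; rewrite face_perm_two_backbones // backbone_next_range ?partner_range.
Qed.

Lemma face_inj : {in endpoints d &, injective face}.
Proof.
move=> u v; rewrite !mem_endpoints => u_range v_range.
rewrite !face_perm_two_backbones // => /backbone_next_inj eq_p.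
by rewrite -(partnerK u_range) -(partnerK v_range) eq_p // inE partner_range.
Qed.

Lemma partner_of_unmarked_face v : 0 < v <= N -> face v \notin marked ->
  partner d v = (face v).-1.
Proof. by move=> v_range; rewrite face_perm_two_backbones // => /backbone_next_unmarked ->. Qed.

(* An arc (v - 1, v) cannot be crossed. *)
Lemma no_partner_pred v : 0 < v <= N -> partner d v = v.-1 -> False.
Proof.
move=> v_range pv; case: (partner_arc v_range); rewrite pv => arc_v.
  by have [] := arc_bounds arc_v; lia.
by case/hasP: (arc_crossed arc_v) => -[x y] _; rewrite /crossing /=; lia.
Qed.

(* The arcs (v - 1, w) and (v, w - 1) would form a stack of size two. *)
Lemma no_partner_pred_swap v w : 0 < v <= N -> 0 < w <= N -> v < w ->
  partner d v = w.-1 -> partner d w = v.-1 -> False.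
Proof.
move=> v_range w_range lt_vw pv pw.
have vw_arc : (v, w.-1) \in arcs.
  by case: (partner_arc v_range); rewrite pv // => /arc_bounds [] *; lia.
have wv_arc : (v.-1, w) \in arcs.
  by case: (partner_arc w_range); rewrite pw // => /arc_bounds [] *; lia.
by apply: (no_stack_arcs wv_arc); rewrite prednK //; case/andP: v_range.
Qed.

Lemma face_short_cycle_marked : {in endpoints d, forall v,
  face v = v \/ face (face v) = v -> (v \in marked) || (face v \in marked)}.
Proof.
move=> v; rewrite mem_endpoints => v_range cyc_v.
apply/negPn/negP; rewrite negb_or => /andP [v_unmarked fv_unmarked].
have pv := partner_of_unmarked_face v_range fv_unmarked.
have fv_range := face_range v_range.
have [fv_v | fv_neq] := eqVneq (face v) v.
  by apply: (no_partner_pred v_range); rewrite pv fv_v.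
case: cyc_v => [/eqP | ffv]; first by rewrite (negbTE fv_neq).
have pfv : partner d (face v) = v.-1 by rewrite partner_of_unmarked_face ?ffv.
case: (ltngtP v (face v)) => [lt_v | gt_v | eq_v]; last by rewrite -eq_v eqxx in fv_neq.
- exact: (no_partner_pred_swap v_range fv_range lt_v pv pfv).
- exact: (no_partner_pred_swap fv_range v_range gt_v pfv pv).
Qed.

Lemma dN_le_size_endpoints : N <= size (endpoints d).
Proof.
rewrite -[X in X <= _](size_iota 1); apply: uniq_leq_size (iota_uniq 1 N) _ => v.
by rewrite mem_iota mem_endpoints; lia.
Qed.

Lemma size_endpoints_le : size (endpoints d) <= N.
Proof.
rewrite -(size_iota 1 N); apply: uniq_leq_size endpoints_uniq _ => v.
by rewrite mem_iota mem_endpoints; lia.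
Qed.

Lemma ncycles_two_backbones : 3 * ncycles d <= 2 * narcs d + 4.
Proof.
have face_dom : {in endpoints d, forall v, face v \in endpoints d}.
  by move=> v; rewrite !mem_endpoints; apply: face_range.
have := count_least_in_orbit size_endpoints_le face_dom face_inj face_short_cycle_marked
  endpoints_uniq.
by rewrite size_arc_endpoints.
Qed.

Lemma genus0_ncycles : nontrivial d -> has_genus d 0 -> ncycles d = narcs d.
Proof.
rewrite /nontrivial /has_genus /nboundary /nbackbones d_bs /= => /and3P [-> -> _] /=.
by rewrite addn0; lia.
Qed.

Lemma dN_genus0_two_backbones : nontrivial d -> has_genus d 0 -> N <= 8.
Proof.
move=> d_nontrivial d_genus; have := ncycles_two_backbones.
have := dN_le_size_endpoints; rewrite size_arc_endpoints genus0_ncycles // /narcs; lia.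
Qed.

End TwoBackbones.

(* The arc lists, sorted by left end, whose endpoints are exactly the entries of
   [av]; any fuel [k >= size av] suffices. *)
Fixpoint matchings (k : nat) (av : seq nat) : seq (seq (nat * nat)) :=
  match av with
  | [::] => [:: [::]]
  | x :: r => if k is k'.+1 then
      flatten [seq [seq (x, y) :: m | m <- matchings k' (rem y r)] | y <- r]
    else [::]
  end.

Lemma sorted_arcs_head_min x y l :
  sorted (fun a b : nat * nat => a.1 < b.1) ((x, y) :: l) ->
  all (fun a : nat * nat => a.1 < a.2) ((x, y) :: l) ->
  {in arc_endpoints ((x, y) :: l), forall z, x <= z}.
Proof.
have lt1_trans : transitive (fun a b : nat * nat => a.1 < b.1) by move=> ? ? ?; apply: ltn_trans.
move=> /(order_path_min lt1_trans) /allP arcs_right /= /andP [lt_xy /allP arcs_lt] z.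
case/arc_endpointsP => -[a1 a2]; rewrite inE => /orP [/eqP [-> ->] | a_l] /= /orP [] /eqP ->.
- by [].
- exact: ltnW.
- exact: ltnW (arcs_right _ a_l).
- by have := arcs_right _ a_l; have := arcs_lt _ a_l; rewrite /=; lia.
Qed.

Lemma mem_matchings l k av : size av <= k -> sorted ltn av ->
  perm_eq (arc_endpoints l) av -> sorted (fun a b : nat * nat => a.1 < b.1) l ->
  all (fun a : nat * nat => a.1 < a.2) l -> l \in matchings k av.
Proof.
elim: l k av => [|[x y] l IHl] k [|z r] //=; try by move=> _ _ /perm_size.
  by case: k.
case: k => // k; rewrite ltnS => size_r sorted_zr perm_l sorted_l /andP [lt_xy arcs_lt].
have z_min : {in z :: r, forall w, z <= w}.
  move=> w; rewrite inE => /orP [/eqP -> // | w_r].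
  by apply: ltnW; move: w_r; apply/allP; apply: order_path_min sorted_zr; apply: ltn_trans.
have x_min := sorted_arcs_head_min sorted_l (introT andP (conj lt_xy arcs_lt)).
have z_x : z = x.
  apply/eqP; rewrite eqn_leq x_min ?z_min //; first by rewrite -(perm_mem perm_l) inE eqxx.
  by rewrite (perm_mem perm_l) inE eqxx.
subst z.
have y_r : y \in r.
  have : y \in x :: r by rewrite -(perm_mem perm_l) !inE eqxx orbT.
  by rewrite inE => /orP [/eqP y_x | //]; rewrite y_x ltnn in lt_xy.
have perm_rem : perm_eq (arc_endpoints l) (rem y r).
  by rewrite -(perm_cons y) -(perm_cons x) (perm_trans perm_l) // perm_cons perm_to_rem.
apply/flattenP; exists [seq (x, y) :: m | m <- matchings k (rem y r)]; first exact: map_f.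
apply: map_f; apply: IHl => //; last exact: path_sorted sorted_l.
- by rewrite size_rem // (leq_trans (leq_pred _)).
- exact: (subseq_sorted ltn_trans (rem_subseq _ _) (path_sorted sorted_zr)).
Qed.

Definition two_backbone_diagrams (M : nat) : seq diagram :=
  flatten [seq [seq ((N, [:: s1; N - s1]), arcs)
                  | s1 <- iota 1 N, arcs <- matchings N (iota 1 N)]
          | N <- iota 0 M.+1].

Lemma mem_two_backbone_diagrams d s1 s2 M :
  valid_diagram d -> dbs d = [:: s1; s2] -> {subset iota 1 (dN d) <= endpoints d} ->
  dN d <= M -> d \in two_backbone_diagrams M.
Proof.
case: d => -[N bs] arcs; rewrite /valid_diagram /dbs /dN /darcs /=.
move=> /and5P [bs_pos /eqP sum_bs /allP arcs_bounds ends_uniq arcs_sorted] bs_eq ends_cover le_NM.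
rewrite bs_eq /= addn0 andbT in sum_bs bs_pos.
have ends_perm : perm_eq (endpoints ((N, bs), arcs)) (iota 1 N).
  apply: uniq_perm ends_uniq (iota_uniq 1 N) _ => v; apply/idP/idP; last exact: ends_cover.
  case/arc_endpointsP => -[x y] /arcs_bounds /= /and3P [? ? ?] /orP [] /eqP ->;
    rewrite mem_iota /=; lia.
apply/flattenP; exists [seq ((N, [:: s1'; N - s1']), m) | s1' <- iota 1 N,
  m <- matchings N (iota 1 N)]; first by apply/mapP; exists N; rewrite // mem_iota; lia.
rewrite bs_eq (_ : s2 = N - s1); last lia.
apply/allpairsP; exists (s1, arcs); split => //=; first by rewrite mem_iota; lia.
apply: mem_matchings ends_perm arcs_sorted _; rewrite ?size_iota ?iota_ltn_sorted //.
by apply/allP => a /arcs_bounds /and3P [].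
Qed.

Definition has_genusb (d : diagram) (g : nat) : bool :=
  (2%:Z - (2 * g)%:Z - (nboundary d)%:Z == (nbackbones d)%:Z - (narcs d)%:Z)%R.

Lemma has_genusP d g : reflect (has_genus d g) (has_genusb d g).
Proof. exact: eqP. Qed.

Definition genus0_two_backbone_shadow (d : diagram) : bool :=
  [&& valid_diagram d, nbackbones d == 2, shadow d, nontrivial d & has_genusb d 0].

Lemma genus0_two_backbone_shadow_iff d :
  valid_diagram d /\ nbackbones d = 2 /\ shadow d /\ nontrivial d /\ has_genus d 0 <->
  genus0_two_backbone_shadow d.
Proof.
rewrite /genus0_two_backbone_shadow.
by split => [[-> [-> [-> [-> /has_genusP ->]]]] | /and5P [-> /eqP -> -> -> /has_genusP]].
Qed.

Lemma genus0_two_backbone_shadow_enum d :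
  genus0_two_backbone_shadow d -> d \in two_backbone_diagrams 8.
Proof.
case/and5P => d_valid; rewrite /nbackbones; case d_bs: (dbs d) => [|s1 [|s2 []]] // _.
move=> d_shadow d_nontrivial /has_genusP d_genus.
apply: (mem_two_backbone_diagrams d_valid d_bs).
  by move=> v; rewrite mem_iota (mem_endpoints d_valid d_shadow); lia.
exact: (dN_genus0_two_backbones d_valid d_bs d_shadow).
Qed.

Definition genus0_two_backbone_shadows : seq diagram :=
  [:: ((4, [:: 1; 3]), [:: (1, 3); (2, 4)]);
      ((4, [:: 2; 2]), [:: (1, 3); (2, 4)]);
      ((4, [:: 3; 1]), [:: (1, 3); (2, 4)]);
      ((6, [:: 2; 4]), [:: (1, 4); (2, 5); (3, 6)]);
      ((6, [:: 3; 3]), [:: (1, 3); (2, 5); (4, 6)]);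
      ((6, [:: 4; 2]), [:: (1, 4); (2, 5); (3, 6)]);
      ((8, [:: 4; 4]), [:: (1, 4); (2, 6); (3, 7); (5, 8)])].

Lemma genus0_two_backbone_shadows_complete :
  all (fun d => genus0_two_backbone_shadow d ==> (d \in genus0_two_backbone_shadows))
      (two_backbone_diagrams 8).
Proof. by vm_compute. Qed.

Lemma genus0_two_backbone_shadows_sound :
  all genus0_two_backbone_shadow genus0_two_backbone_shadows.
Proof. by vm_compute. Qed.

Theorem corollary2 :
  exists s : seq diagram,
    uniq s /\ size s = 7 /\
    forall d : diagram,
      (valid_diagram d /\ nbackbones d = 2 /\ shadow d /\ nontrivial d /\
       has_genus d 0) <-> d \in s.
Proof.
exists genus0_two_backbone_shadows; do 2![split; first by []].
move=> d; rewrite genus0_two_backbone_shadow_iff; split => [d_shadow | d_listed].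
  have d_enum := genus0_two_backbone_shadow_enum d_shadow.
  by have := allP genus0_two_backbone_shadows_complete d d_enum; rewrite d_shadow.
exact: (allP genus0_two_backbone_shadows_sound).
Qed.
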